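(* Let $t\geq 2$ be a fixed integer and let $P$ be a finite poset with the unique cover twin property (UCTP) having at least $2$ elements. Then $\mathrm{sat}^{\star}([t]^n,P)=\Omega(\sqrt{n})$ as $n\to\infty$.
   Context: For positive integers $n,t$, $[n]=\{1,\dots,n\}$ and the hypergrid $[t]^n$ is the set of functions $f:[n]\to[t]$, partially ordered by $f\leq g$ iff $f(i)\leq g(i)$ for all $i\in[n]$. An induced copy of a poset $P$ in a family $\mathcal{F}\subseteq[t]^n$ is an injective map $\phi:P\to\mathcal{F}$ such that $\phi(x)\leq\phi(y)$ iff $x\leq_P y$. A family $\mathcal{F}\subseteq[t]^n$ is induced $P$-free if it contains no induced copy of $P$; it is induced $P$-saturated if it is induced $P$-free and for every $f\in[t]^n\setminus\mathcal{F}$ the family $\mathcal{F}\cup\{f\}$ contains an induced copy of $P$. Whenever $P$ embeds as an induced subposet of $[t]^n$, $\mathrm{sat}^{\star}([t]^n,P)$ denotes the minimum size of an induced $P$-saturated family in $[t]^n$. In a poset $P$, an element $x$ covers an element $y\neq x$ if $y\leq_P x$ and there is no $z\in P\setminus\{x,y\}$ with $y\leq_P z\leq_P x$. $P$ has the UCTP if whenever $x$ covers $y$, there exists $y'\in P\setminus\{x,y\}$ such that $x$ covers $y'$. *)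

From HB Require Import structures.
From mathcomp Require Import all_boot all_order.
Set Implicit Arguments. Unset Strict Implicit. Unset Printing Implicit Defensive.
Import Order.TTheory.
Local Open Scope order_scope.

(* The hypergrid [t]^n: functions [n] -> [t], encoded as {ffun 'I_n -> 'I_t}
   ([t] = {1..t} is identified with 'I_t = {0..t-1}, an order isomorphism). *)
Definition grid (n t : nat) := {ffun 'I_n -> 'I_t}.

Definition grid_le (n t : nat) (f g : grid n t) : bool :=
  [forall i, (f i <= g i)%N].

Definition induced_copy (d : Order.disp_t) (P : finPOrderType d) (n t : nat)
    (F : {set grid n t}) (phi : P -> grid n t) : Prop :=
  injective phi /\ (forall x, phi x \in F) /\
  (forall x y, grid_le (phi x) (phi y) = (x <= y)).

Definition induced_free (d : Order.disp_t) (P : finPOrderType d) (n t : nat)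
    (F : {set grid n t}) : Prop :=
  ~ exists phi : P -> grid n t, induced_copy F phi.

Definition induced_saturated (d : Order.disp_t) (P : finPOrderType d) (n t : nat)
    (F : {set grid n t}) : Prop :=
  induced_free P F /\
  forall f : grid n t, f \notin F ->
    exists phi : P -> grid n t, induced_copy (f |: F) phi.

Definition covers (d : Order.disp_t) (P : finPOrderType d) (x y : P) : Prop :=
  y != x /\ y <= x /\ ~ exists z : P, [/\ z != x, z != y, y <= z & z <= x].

Definition UCTP (d : Order.disp_t) (P : finPOrderType d) : Prop :=
  forall x y : P, covers x y ->
    exists y' : P, [/\ y' != x, y' != y & covers x y'].

From mathcomp Require Import all_boot all_order.
Import Order.TTheory.
Set Implicit Arguments. Unset Strict Implicit. Unset Printing Implicit Defensive.

(* For every coordinate i, a saturated family F contains a pair A, B such that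
   B exceeds A in coordinate i and nowhere else; distinct coordinates give
   distinct pairs, whence n <= |F|^2.  If there were no such pair, pick Y in F
   extremal within its layer {C in F | C i = Y i} and let X be Y moved by one
   step in coordinate i.  Then X is not in F, is comparable to Y, and every
   other member of F compares with X exactly as it compares with Y.  The copy
   of P created by adding X can thus be moved from X to Y, unless Y already
   lies in it; in that case the two points of P sent to X and Y are comparable
   and have the same relations to all other points, which UCTP forbids: the
   upper one covers the lower one, and a second element covered by the upper
   one would lie below the lower one. *)

Lemma UCTP_twin_eq d (P : finPOrderType d) (a b : P) :
  UCTP P -> (a <= b)%O ->
  (forall z, z != a -> z != b -> (z <= b)%O -> (z <= a)%O) -> a = b.
Proof.
move=> uctp le_ab twin; have [//|neq_ab] := eqVneq a b; exfalso.
have no_between z : z != a -> z != b -> (a <= z)%O -> (z <= b)%O -> False.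
  move=> za zb az zb'; have za' := twin z za zb zb'.
  by move: za; rewrite eq_le az za'.
have [y' [y'b y'a [_ [y'_le_b no_mid]]]] : exists y',
    [/\ y' != b, y' != a & covers b y'].
  apply: uctp; split=> //; split=> // [[z [zb za az zb']]].
  exact: (no_between z).
apply: no_mid; exists a; split => //; first by rewrite eq_sym.
exact: twin.
Qed.

Section Grid.
Variables n t : nat.
Implicit Types f g h : grid n t.

Lemma grid_leP f g : reflect (forall i, (f i <= g i)%N) (grid_le f g).
Proof. exact: forallP. Qed.

Lemma grid_le_refl f : grid_le f f.
Proof. by apply/grid_leP. Qed.

Lemma grid_le_trans f g h : grid_le f g -> grid_le g h -> grid_le f h.
Proof.
move=> /grid_leP fg /grid_leP gh; apply/grid_leP => i.
exact: leq_trans (fg i) (gh i).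
Qed.

Lemma grid_le_sum_eq f g :
  grid_le f g -> (\sum_j (g j : nat) <= \sum_j (f j : nat))%N -> f = g.
Proof.
move=> /grid_leP le_fg le_sum; apply/ffunP => j; apply/val_inj/eqP.
rewrite eq_sym eqn_leq le_fg andbT.
have : (\sum_k (g k - f k) == 0)%N by rewrite sumnB // subn_eq0.
by rewrite sum_nat_eq0 => /forallP /(_ j); rewrite subn_eq0.
Qed.

Definition grid_set f (i : 'I_n) (v : 'I_t) : grid n t :=
  [ffun j => if j == i then v else f j].

Lemma grid_set_le f i v : grid_le (grid_set f i v) f = (v <= f i)%N.
Proof.
apply/grid_leP/idP => [/(_ i)|le_v j]; first by rewrite ffunE eqxx.
by rewrite ffunE; case: eqP => [->|].
Qed.

Lemma grid_le_set f i v : grid_le f (grid_set f i v) = (f i <= v)%N.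
Proof.
apply/grid_leP/idP => [/(_ i)|le_v j]; first by rewrite ffunE eqxx.
by rewrite ffunE; case: eqP => [->|].
Qed.

Definition lifts_at (i : 'I_n) f g : bool :=
  (f i < g i)%N && [forall j, (j != i) ==> (g j <= f j)%N].

Lemma lifts_atP i f g :
  reflect ((f i < g i)%N /\ forall j, j != i -> (g j <= f j)%N) (lifts_at i f g).
Proof.
apply: (iffP andP) => [[lt_i /forallP le_j]|[lt_i le_j]].
  by split=> // j; exact/implyP.
by split=> //; apply/forallP => j; apply/implyP; exact: le_j.
Qed.

Lemma lifts_at_inj i i' f g : lifts_at i f g -> lifts_at i' f g -> i = i'.
Proof.
move=> /lifts_atP [_ le_j] /lifts_atP [lt_i' _]; apply/eqP.
by apply: contraTT lt_i' => ne; rewrite -leqNgt le_j // eq_sym.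
Qed.

End Grid.

Definition twin_in n t (F : {set grid n t}) (X Y : grid n t) : Prop :=
  forall C, C \in F -> C != Y ->
    grid_le C X = grid_le C Y /\ grid_le X C = grid_le Y C.

Section Saturated.
Variables (d : Order.disp_t) (P : finPOrderType d) (n t : nat).
Variable F : {set grid n t}.
Hypothesis satF : induced_saturated P F.

Lemma saturated_copy_at X : X \notin F ->
  exists (phi : P -> grid n t) x,
    [/\ induced_copy (X |: F) phi, phi x = X & forall z, z != x -> phi z \in F].
Proof.
move=> XF; have [phi copy] := satF.2 X XF; have [inj_phi [in_phi _]] := copy.
have [x /eqP phix|noX] := pickP (fun x => phi x == X).
  exists phi, x; split=> // z zx; move: (in_phi z); rewrite in_setU1.
  by case/orP => // /eqP phiz; move: zx; rewrite -(inj_phi z x) ?phiz ?phix ?eqxx.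
case: satF.1; exists phi; case: copy => [_ [_ ord]]; split=> //; split=> // z.
by move: (in_phi z); rewrite in_setU1 noX.
Qed.

Lemma saturated_nonempty : (0 < t)%N -> (1 < #|P|)%N -> exists Y, Y \in F.
Proof.
move=> t_gt0 /card_gt1P [a [b [_ _ ab]]].
case: (set_0Vmem F) => [F0|[Y YF]]; last by exists Y.
pose f : grid n t := [ffun=> Ordinal t_gt0].
have [phi [inj_phi [in_phi _]]] :
  exists phi : P -> grid n t, induced_copy (f |: F) phi.
  by apply: satF.2; rewrite F0 inE.
move: (in_phi a) (in_phi b); rewrite F0 setU0 !inE => /eqP pa /eqP pb.
by move: ab; rewrite (inj_phi a b) ?eqxx // pa pb.
Qed.

Hypothesis uctp : UCTP P.

Lemma saturated_no_twin X Y : X \notin F -> Y \in F ->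
  grid_le X Y || grid_le Y X -> twin_in F X Y -> False.
Proof.
move=> XF YF cmp twin.
have [phi [x [[inj_phi [_ ord]] phix phiF]]] := saturated_copy_at XF.
have twin_phi z : z != x -> phi z != Y ->
    grid_le (phi z) X = grid_le (phi z) Y /\ grid_le X (phi z) = grid_le Y (phi z).
  by move=> zx zY; apply: twin => //; exact: phiF.
have [w /eqP phiw|notY] := pickP (fun w => phi w == Y).
  have wx : w != x by apply: contraNneq XF => wx; rewrite -phix -wx phiw.
  have twinP z : z != x -> z != w -> (z <= x)%O = (z <= w)%O.
    move=> zx zw; rewrite -!ord phix phiw; apply: (twin_phi z zx _).1.
    by rewrite -phiw (inj_eq inj_phi).
  apply: (negP wx); apply/eqP; move: cmp; rewrite -phix -phiw !ord.
  case/orP => le.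
    by apply/esym/UCTP_twin_eq => // z zx zw; rewrite twinP.
  by apply/UCTP_twin_eq => // z zw zx; rewrite twinP.
case: satF.1; exists (fun z => if z == x then Y else phi z); split; [|split].
- move=> a b; case: eqP => [-> | /eqP ax]; case: eqP => [-> | /eqP bx] //.
  + by move/esym/eqP; rewrite notY.
  + by move/eqP; rewrite notY.
  + exact: inj_phi.
- by move=> z; case: eqP => [_|/eqP zx]; [exact: YF|exact: phiF].
- move=> a b; case: eqP => [-> | /eqP ax]; case: eqP => [-> | /eqP bx].
  + by rewrite grid_le_refl lexx.
  + by rewrite -ord phix; case: (twin_phi b bx (negbT (notY b))).
  + by rewrite -ord phix; case: (twin_phi a ax (negbT (notY a))).
  + exact: ord.
Qed.

End Saturated.

Section Layers.
Variables (n t : nat) (F : {set grid n t}) (i : 'I_n).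
Hypothesis no_lift : forall A B, A \in F -> B \in F -> ~~ lifts_at i A B.

Lemma twin_in_set_succ Y (v : 'I_t) : Y \in F -> (Y i).+1 = v ->
  (forall C, C \in F -> grid_le Y C -> C i = Y i -> C = Y) ->
  [/\ grid_set Y i v \notin F, grid_le Y (grid_set Y i v)
    & twin_in F (grid_set Y i v) Y].
Proof.
move=> YF Yv Ymax; set X := grid_set Y i v.
have YX : grid_le Y X by rewrite grid_le_set -Yv.
have Xi : X i = v by rewrite ffunE eqxx.
have Xj j : j != i -> X j = Y j by move=> ji; rewrite ffunE (negbTE ji).
split=> //.
  apply/negP => XF; case/negP: (no_lift YF XF); apply/lifts_atP.
  by split=> [|j ji]; rewrite ?Xi -?Yv ?Xj.
move=> C CF CY; split; apply/idP/idP.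
- move=> /grid_leP CX; apply/grid_leP => j;
  have [->|ji] := eqVneq j i; last by rewrite -Xj ?CX.
  rewrite leqNgt; apply/negP => lt; case/negP: (no_lift YF CF); apply/lifts_atP.
  by split=> // k ki; rewrite -Xj ?CX.
- by move=> le; exact: grid_le_trans le YX.
- by move=> le; exact: grid_le_trans YX le.
- move=> /grid_leP YC; apply/grid_leP => j;
  have [->|ji] := eqVneq j i; last by rewrite Xj ?YC.
  rewrite Xi -Yv ltn_neqAle YC andbT.
  apply: contraNneq CY => /esym/val_inj eq_i.
  by apply/eqP; apply: Ymax => //; apply/grid_leP.
Qed.

Lemma twin_in_set_pred Y (v : 'I_t) : Y \in F -> v.+1 = Y i ->
  (forall C, C \in F -> grid_le C Y -> C i = Y i -> C = Y) ->
  [/\ grid_set Y i v \notin F, grid_le (grid_set Y i v) Y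
    & twin_in F (grid_set Y i v) Y].
Proof.
move=> YF Yv Ymin; set X := grid_set Y i v.
have XY : grid_le X Y by rewrite grid_set_le -Yv.
have Xi : X i = v by rewrite ffunE eqxx.
have Xj j : j != i -> X j = Y j by move=> ji; rewrite ffunE (negbTE ji).
split=> //.
  apply/negP => XF; case/negP: (no_lift XF YF); apply/lifts_atP.
  by split=> [|j ji]; rewrite ?Xi -?Yv ?Xj.
move=> C CF CY; split; apply/idP/idP.
- by move=> le; exact: grid_le_trans le XY.
- move=> /grid_leP CY'; apply/grid_leP => j;
  have [->|ji] := eqVneq j i; last by rewrite Xj ?CY'.
  rewrite Xi -ltnS Yv ltn_neqAle CY' andbT.
  apply: contraNneq CY => /val_inj eq_i.
  by apply/eqP; apply: Ymin => //; apply/grid_leP.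
- move=> /grid_leP XC; apply/grid_leP => j;
  have [->|ji] := eqVneq j i; last by rewrite -Xj ?XC.
  rewrite leqNgt; apply/negP => lt; case/negP: (no_lift CF YF); apply/lifts_atP.
  by split=> // k ki; rewrite -Xj ?XC.
- by move=> le; exact: grid_le_trans XY le.
Qed.

End Layers.

Lemma saturated_lifts_at d (P : finPOrderType d) n t (F : {set grid n t})
    (i : 'I_n) : UCTP P -> (1 < t)%N -> (1 < #|P|)%N -> induced_saturated P F ->
  exists p : grid n t * grid n t, [&& p.1 \in F, p.2 \in F & lifts_at i p.1 p.2].
Proof.
move=> uctp t_gt1 P_gt1 satF.
apply/existsP; apply: contraT => /existsPn no_pair; exfalso.
have no_lift A B : A \in F -> B \in F -> ~~ lifts_at i A B.
  by move=> AF BF; have := no_pair (A, B); rewrite /= AF BF.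
pose sum (f : grid n t) := \sum_j (f j : nat).
case: (boolP [exists Y in F, (Y i).+1 < t]%N) => [/exists_inP [Y1 Y1F Y1i]|].
- have Y1low : (Y1 \in F) && ((Y1 i).+1 < t)%N by rewrite Y1F.
  have [Y /andP [YF Yi] Ymax] :=
    @arg_maxnP _ Y1 [pred Y | (Y \in F) && ((Y i).+1 < t)%N] sum Y1low.
  have layer_max C : C \in F -> grid_le Y C -> C i = Y i -> C = Y.
    by move=> CF YC Ci; apply/esym/grid_le_sum_eq/Ymax; rewrite //= CF Ci.
  have [XF YX twin] := twin_in_set_succ no_lift (v := Ordinal Yi) YF erefl layer_max.
  by apply: (saturated_no_twin satF uctp XF YF _ twin); rewrite YX orbT.
move=> /exists_inPn top; have [Y0 Y0F] := saturated_nonempty satF (ltnW t_gt1) P_gt1.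
case: (arg_minnP sum Y0F) => Y YF Ymin.
have Y_pos : (0 < Y i)%N.
  by rewrite -ltnS; apply: leq_trans t_gt1 _; rewrite leqNgt top.
have lt_pred : ((Y i).-1 < t)%N := leq_ltn_trans (leq_pred _) (ltn_ord _).
have layer_min C : C \in F -> grid_le C Y -> C i = Y i -> C = Y.
  by move=> CF CY _; exact: grid_le_sum_eq CY (Ymin C CF).
have [XF XY twin] :=
  twin_in_set_pred no_lift (v := Ordinal lt_pred) YF (prednK Y_pos) layer_min.
by apply: (saturated_no_twin satF uctp XF YF _ twin); rewrite XY.
Qed.

Theorem mainTheorem3 (t : nat) (d : Order.disp_t) (P : finPOrderType d) :
  (2 <= t)%N -> (2 <= #|P|)%N -> UCTP P ->
  exists c N : nat, (0 < c)%N /\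
    forall n : nat, (N <= n)%N ->
      forall F : {set grid n t}, induced_saturated P F ->
        (n <= c * #|F| ^ 2)%N.
Proof.
move=> t_gt1 P_gt1 uctp; exists 1, 0; split=> // n _ F satF.
pose pair i := xchoose (saturated_lifts_at i uctp t_gt1 P_gt1 satF).
have pairP i :
  [&& (pair i).1 \in F, (pair i).2 \in F & lifts_at i (pair i).1 (pair i).2].
  exact: (xchooseP (saturated_lifts_at i uctp t_gt1 P_gt1 satF)).
have pair_inj : injective pair.
  move=> i i' eq_ii'; have /and3P [_ _ lift_i] := pairP i.
  by have /and3P [_ _] := pairP i'; rewrite -eq_ii'; exact: lifts_at_inj.
rewrite -[n in (n <= _)%N]card_ord -cardsT -(card_imset _ pair_inj).
rewrite mul1n -mulnn -cardsX.
apply/subset_leq_card/subsetP => _ /imsetP [i _ ->].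
by have /and3P [F1 F2 _] := pairP i; rewrite inE F1.
Qed.
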